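(* The manifold with corners $M:=[0,\infty[$ does not admit a local addition in Michor's sense, i.e., there is no smooth map $\tau\colon {}^iTM\to M$ such that (A1) $(\tau,\pi_{TM})\colon{}^iTM\to M\times M$ is a diffeomorphism onto an open neighbourhood of the diagonal in $M\times M$, and (A2) $\tau(0_x)=x$ for all $x\in M$.
   Context: Identify $TM$ with $M\times\mathbb R$ and $\pi_{TM}(x,y)=x$. The set of inner tangent vectors is ${}^iTM=(\{0\}\times[0,\infty[)\cup(]0,\infty[\times\mathbb R)$ (the tangent vectors $\dot\gamma(0)$ of smooth curves $\gamma\colon[0,1[\,\to M$), a convex subset of $\mathbb R^2$ with dense interior; $0_x=(x,0)$. Smoothness on such sets: a map $f$ on a locally convex subset $U$ of $\mathbb R^m$ with dense interior is $C^1$ if it is continuous, $C^1$ on the interior, and its differential extends continuously to $U\times\mathbb R^m$; $C^k$ inductively; smooth means $C^k$ for all $k$. A diffeomorphism is a smooth bijection with smooth inverse. *)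

From mathcomp Require Import all_boot all_order all_algebra.
From mathcomp Require Import all_classical all_reals all_analysis.
Set Implicit Arguments. Unset Strict Implicit. Unset Printing Implicit Defensive.
Import Order.TTheory GRing.Theory Num.Theory.
Import numFieldNormedType.Exports.
Local Open Scope classical_set_scope.
Local Open Scope ring_scope.

Fixpoint Ck (R : realType) (k : nat) (V W : normedModType R)
  (U : set V) (f : V -> W) {struct k} : Prop :=
  match k with
  | 0%N => {within U, continuous f}
  | k'.+1 =>
      {within U, continuous f} /\
      (forall x, (U°) x -> differentiable f x) /\
      exists df : (V * V)%type -> W,
        (forall x v, (U°) x -> df (x, v) = 'd f x v) /\
        @Ck R k' _ W (U `*` setT) df
  end.

Definition smooth_on (R : realType) (V W : normedModType R)
  (U : set V) (f : V -> W) : Prop := forall k, @Ck R k V W U f.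

Definition diffeo_onto (R : realType) (V W : normedModType R)
  (U : set V) (O : set W) (f : V -> W) : Prop :=
  f @` U = O /\ smooth_on U f /\
  exists g : W -> V, g @` O `<=` U /\ smooth_on O g /\
    (forall x, U x -> g (f x) = x) /\ (forall y, O y -> f (g y) = y).

Definition Mset (R : realType) : set R := [set x | 0 <= x].

(* TM = M x R, tangent vectors (x,y) with base point x; inner tangent
   vectors iTM = ({0} x [0,oo[) u (]0,oo[ x R) *)
Definition iTM (R : realType) : set (R * R)%type :=
  [set p | (p.1 = 0 /\ 0 <= p.2) \/ 0 < p.1].

Definition piTM (R : realType) (p : (R * R)%type) : R := p.1.

Definition open_in_MxM (R : realType) (O : set (R * R)%type) : Prop :=
  exists G : set (R * R)%type, open G /\ O = G `&` (@Mset R `*` @Mset R).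

Definition local_addition (R : realType) (tau : (R * R)%type -> R) : Prop :=
  (forall p, @iTM R p -> @Mset R (tau p)) /\
  smooth_on (@iTM R) tau /\
  (exists O : set (R * R)%type,
      open_in_MxM O /\ (forall x, @Mset R x -> O (x, x)) /\
      diffeo_onto (@iTM R) O (fun p => (tau p, piTM p))) /\
  (forall x, @Mset R x -> tau (x, 0) = x).

From mathcomp Require Import all_boot all_order all_algebra.
From mathcomp Require Import all_classical all_reals all_analysis.
From mathcomp Require Import lra.

Set Implicit Arguments.
Unset Strict Implicit.
Unset Printing Implicit Defensive.
Import Order.TTheory GRing.Theory Num.Theory.
Import numFieldNormedType.Exports.
Local Open Scope classical_set_scope.
Local Open Scope ring_scope.

(* Every neighbourhood of the diagonal in M x M contains a point (0, x) with
   x > 0, so the diffeomorphism (tau, pi) hits it: some tangent vector v at x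
   has tau (x, v) = 0.  Over the interior point x the whole fibre {x} x R lies
   in iTM, and t |-> tau (x, t) is continuous, injective and M-valued; it
   attains its minimum 0 at v.  But a continuous injective map R -> R is
   strictly monotone and has no minimum. *)

Section halfline.
Context {R : realType}.

Lemma continuous_inj_no_minimum (h : R -> R) (v : R) :
  continuous h -> injective h -> exists t, h t < h v.
Proof.
move=> h_cont h_inj.
have [h_incr|h_decr] := @itv_continuous_inj_mono R h `]-oo, +oo[
  (continuous_subspaceT h_cont) (in2W h_inj).
- by exists (v - 1); apply: h_incr; rewrite ?in_itv //=; lra.
- by exists (v + 1); apply: h_decr; rewrite ?in_itv //=; lra.
Qed.

Lemma iTM_interior (x t : R) : 0 < x -> (@iTM R)° (x, t).
Proof.
move=> x_gt0; apply/nbhs_ballP; exists x => // -[y s] [/= xy _]; right => /=.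
by move: xy; rewrite /ball /= ltr_distlC subrr => /andP[].
Qed.

Lemma smooth_on_continuous (V W : normedModType R) (U : set V) (f : V -> W) x :
  smooth_on U f -> U° x -> {for x, continuous f}.
Proof.
move=> /(_ 1%N) [_ [f_diff _]] Ux.
exact/differentiable_continuous/f_diff.
Qed.

Lemma open_in_MxM_vertical (O : set (R * R)%type) :
  open_in_MxM O -> O (0, 0) -> exists2 x, 0 < x & O (0, x).
Proof.
move=> [G [G_open ->]] [G00 _].
have : nbhs (0 : R) [set y | G (0, y)].
  have to_00 : (fun y : R => ((0 : R), y)) @ nbhs (0 : R) --> ((0 : R), (0 : R)).
    exact: cvg_pair (cvg_cst _) cvg_id.
  by apply: to_00; apply: open_nbhs_nbhs.
move=> /nbhs_ballP[e e_gt0 Ge].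
exists (e / 2); first by rewrite divr_gt0.
split; last by split => /=; [exact: lexx | apply/ltW; rewrite divr_gt0].
apply: Ge; rewrite /ball /= sub0r normrN gtr0_norm ?divr_gt0 //.
by rewrite ltr_pdivrMr // ltr_pMr // ltr1n.
Qed.

End halfline.

Theorem propositionA2 (R : realType) :
  ~ exists tau : (R * R)%type -> R, local_addition tau.
Proof.
move=> [tau [tau_M [tau_smooth [[D [openD [diagD diffeo]]] _]]]].
case: diffeo => tau_img [_ [g [_ [_ [g_tau _]]]]].
have [x x_gt0 Ox] := open_in_MxM_vertical openD (diagD 0 (lexx 0)).
move: Ox; rewrite -tau_img => -[[x' v] _ [tau_v0 x'x]].
rewrite /piTM /= in x'x; subst x'.
have fibre_iTM t : @iTM R (x, t) by right.
have h_cont : continuous (fun t => tau (x, t)).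
  move=> t; have to_xt : (fun s => (x, s)) @ nbhs t --> (x, t).
    exact: cvg_pair (cvg_cst x) cvg_id.
  apply: cvg_comp _ _ to_xt _.
  exact: smooth_on_continuous tau_smooth (iTM_interior t x_gt0).
have h_inj : injective (fun t => tau (x, t)).
  move=> s t /= tau_st.
  have := g_tau _ (fibre_iTM s); rewrite /piTM /= tau_st g_tau //.
  by case.
have [t] := continuous_inj_no_minimum v h_cont h_inj.
by rewrite /= tau_v0 ltNge tau_M.
Qed.
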